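(* Let $\mathfrak{R}$ be an alternative ring with a nontrivial idempotent $e_1$ and Peirce decomposition $\mathfrak{R}=\mathfrak{R}_{11}\oplus\mathfrak{R}_{12}\oplus\mathfrak{R}_{21}\oplus\mathfrak{R}_{22}$, satisfying: (i) if $a_{11}\in\mathfrak{R}_{11}$, $a_{22}\in\mathfrak{R}_{22}$ and $[a_{11}+a_{22},\mathfrak{R}_{12}]=0$, then $a_{11}+a_{22}\in\mathcal{Z}(\mathfrak{R})$; (ii) if $a_{11}\in\mathfrak{R}_{11}$, $a_{22}\in\mathfrak{R}_{22}$ and $[a_{11}+a_{22},\mathfrak{R}_{21}]=0$, then $a_{11}+a_{22}\in\mathcal{Z}(\mathfrak{R})$. Let $\mathcal{D}$ be a multiplicative Lie-type derivation of $\mathfrak{R}$. Then for any $a_{11}\in\mathfrak{R}_{11}$, $b_{12}\in\mathfrak{R}_{12}$, $c_{21}\in\mathfrak{R}_{21}$, $d_{22}\in\mathfrak{R}_{22}$ there exists $z\in\mathcal{Z}(\mathfrak{R})$ such that $\mathcal{D}(a_{11}+b_{12}+c_{21}+d_{22})=\mathcal{D}(a_{11})+\mathcal{D}(b_{12})+\mathcal{D}(c_{21})+\mathcal{D}(d_{22})+z$.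
   Context: Rings are not assumed associative or unital. The associator is $(x,y,z)=(xy)z-x(yz)$; $\mathfrak{R}$ is alternative if $(x,x,y)=0=(y,x,x)$ for all $x,y$. $[x,y]=xy-yx$ and $\mathcal{Z}(\mathfrak{R})=\{r: [r,x]=0\ \forall x\in\mathfrak{R}\}$. Define $p_1(x)=x$, $p_n(x_1,\dots,x_n)=[p_{n-1}(x_1,\dots,x_{n-1}),x_n]$. For $n\ge2$, a (not necessarily additive) map $\mathcal{D}\colon\mathfrak{R}\to\mathfrak{R}$ is a multiplicative Lie $n$-derivation if $\mathcal{D}(p_n(x_1,\dots,x_n))=\sum_{i=1}^n p_n(x_1,\dots,\mathcal{D}(x_i),\dots,x_n)$ for all $x_i\in\mathfrak{R}$; a multiplicative Lie-type derivation is a multiplicative Lie $n$-derivation for some $n\ge2$. A nontrivial idempotent is $e_1\ne0$ with $e_1^2=e_1$ which is not a multiplicative identity. With $e_2a:=a-e_1a$, $ae_2:=a-ae_1$, set $\mathfrak{R}_{ij}=e_i\mathfrak{R}e_j$ ($i,j=1,2$), so $\mathfrak{R}=\bigoplus_{i,j}\mathfrak{R}_{ij}$. *)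

(* a (non-associative) ring is an abelian group (zmodType)
   together with a biadditive multiplication [mul], given explicitly. *)
From HB Require Import structures.
From mathcomp Require Import all_boot all_algebra.
Set Implicit Arguments. Unset Strict Implicit. Unset Printing Implicit Defensive.
Import GRing.Theory.
Local Open Scope ring_scope.

Section NonAssoc.
Variables (R : zmodType) (mul : R -> R -> R).

Definition biadditive : Prop :=
  (forall x y z, mul (x + y) z = mul x z + mul y z) /\
  (forall x y z, mul z (x + y) = mul z x + mul z y).

Definition assoc3 (x y z : R) : R := mul (mul x y) z - mul x (mul y z).

Definition alternative : Prop :=
  forall x y, assoc3 x x y = 0 /\ assoc3 y x x = 0.

Definition lie (x y : R) : R := mul x y - mul y x.

Definition central (r : R) : Prop := forall x, lie r x = 0.

Definition nontrivial_idempotent (e1 : R) : Prop :=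
  e1 <> 0 /\ mul e1 e1 = e1 /\ ~ (forall x, mul e1 x = x /\ mul x e1 = x).

(* e_i a and a e_j, with e_2 a := a - e_1 a, a e_2 := a - a e_1 *)
Definition lmulE (e1 : R) (i : nat) (a : R) : R :=
  if i == 1%N then mul e1 a else a - mul e1 a.
Definition rmulE (e1 : R) (j : nat) (a : R) : R :=
  if j == 1%N then mul a e1 else a - mul a e1.

Definition peirce (e1 : R) (i j : nat) (x : R) : Prop :=
  exists y, x = lmulE e1 i (rmulE e1 j y).

(* lie_poly k xs = p_{k+1}(xs 0, ..., xs k) *)
Fixpoint lie_poly (k : nat) (xs : nat -> R) : R :=
  match k with
  | 0 => xs 0%N
  | k'.+1 => lie (lie_poly k' xs) (xs k)
  end.

Definition lie_n_derivation (n : nat) (D : R -> R) : Prop :=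
  forall xs : nat -> R,
    D (lie_poly n.-1 xs) =
    \sum_(i < n) lie_poly n.-1 (fun j => if j == (i : nat) then D (xs j) else xs j).

Definition lie_type_derivation (D : R -> R) : Prop :=
  exists n, (2 <= n)%N /\ lie_n_derivation n D.

End NonAssoc.

From Pilot Require Import Defs.
From mathcomp Require Import all_boot all_algebra.
Set Implicit Arguments. Unset Strict Implicit. Unset Printing Implicit Defensive.
Import GRing.Theory.
Local Open Scope ring_scope.

(* Write p(y, v) := p_n(y, v, e, ..., e) and d(a, b) := D(a + b) - D a - D b.
   As p_n is additive in each slot, the Lie n-derivation identity with a + b in
   the first (or second) slot gives D(p(a + b, v)) = D(p(a, v)) + D(p(b, v))
   + p(d(a, b), v).  Bracketing with e kills R_11 + R_22 and acts on R_12 and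
   R_21 as -1 and +1; once n >= 3 (a Lie 2-derivation is a Lie 3-derivation),
   p(z, e) = 0 thus forces z into R_11 + R_22, and then p(z, R_12) = 0 (resp.
   p(z, R_21) = 0) means [z, R_12] = 0 (resp. [z, R_21] = 0), so z is central by
   (i) (resp. (ii)).  This criterion makes d(x1, x2) central for many pairs,
   which turns D(p(x1 + x2, y1 + y2)) into the sum of the four D(p(xi, yj)):
   with x = (e, b') and y = (e, c') this gives D(b + c) = D b + D c for b in R_12
   and c in R_21, and with this the same criterion applies to the total defect of
   D on a11 + b12 + c21 + d22. *)

Section NonAssociative.
Variables (R : zmodType) (mul : R -> R -> R).
Hypothesis mul_biadd : biadditive mul.
Local Notation "x ⋆ y" := (mul x y) (at level 40, left associativity).
Local Notation lie := (lie mul).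
Local Notation assoc3 := (assoc3 mul).
Local Notation lie_poly := (lie_poly mul).

Lemma bmulDl x y z : (x + y) ⋆ z = x ⋆ z + y ⋆ z. Proof. exact: mul_biadd.1. Qed.
Lemma bmulDr x y z : z ⋆ (x + y) = z ⋆ x + z ⋆ y. Proof. exact: mul_biadd.2. Qed.

Lemma bmul0l x : 0 ⋆ x = 0.
Proof. by apply: (addrI (0 ⋆ x)); rewrite -bmulDl !addr0. Qed.
Lemma bmul0r x : x ⋆ 0 = 0.
Proof. by apply: (addrI (x ⋆ 0)); rewrite -bmulDr !addr0. Qed.

Lemma bmulNl x y : (- x) ⋆ y = - (x ⋆ y).
Proof. by apply/eqP; rewrite -addr_eq0 -bmulDl addNr bmul0l. Qed.
Lemma bmulNr x y : x ⋆ (- y) = - (x ⋆ y).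
Proof. by apply/eqP; rewrite -addr_eq0 -bmulDr addNr bmul0r. Qed.

Lemma bmulBl x y z : (x - y) ⋆ z = x ⋆ z - y ⋆ z. Proof. by rewrite bmulDl bmulNl. Qed.
Lemma bmulBr x y z : z ⋆ (x - y) = z ⋆ x - z ⋆ y. Proof. by rewrite bmulDr bmulNr. Qed.

Lemma bmulMnl x y n : (x *+ n) ⋆ y = (x ⋆ y) *+ n.
Proof. by elim: n => [|n IHn]; rewrite ?bmul0l // !mulrS bmulDl IHn. Qed.
Lemma bmulMnr x y n : x ⋆ (y *+ n) = (x ⋆ y) *+ n.
Proof. by elim: n => [|n IHn]; rewrite ?bmul0r // !mulrS bmulDr IHn. Qed.

Lemma lieDl x y z : lie (x + y) z = lie x z + lie y z.
Proof. by rewrite /Defs.lie bmulDl bmulDr opprD addrACA. Qed.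
Lemma lieDr x y z : lie z (x + y) = lie z x + lie z y.
Proof. by rewrite /Defs.lie bmulDl bmulDr opprD addrACA. Qed.

Lemma lie0l x : lie 0 x = 0. Proof. by rewrite /Defs.lie bmul0l bmul0r subrr. Qed.
Lemma lie0r x : lie x 0 = 0. Proof. by rewrite /Defs.lie bmul0l bmul0r subrr. Qed.

Lemma lieNl x y : lie (- x) y = - lie x y.
Proof. by rewrite /Defs.lie bmulNl bmulNr opprB opprK addrC. Qed.

Lemma lieC x y : lie y x = - lie x y. Proof. by rewrite /Defs.lie opprB. Qed.

Lemma assoc3Dl x x' y z : assoc3 (x + x') y z = assoc3 x y z + assoc3 x' y z.
Proof. by rewrite /Defs.assoc3 !bmulDl opprD addrACA. Qed.

Lemma assoc3Dm x y y' z : assoc3 x (y + y') z = assoc3 x y z + assoc3 x y' z.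
Proof. by rewrite /Defs.assoc3 bmulDl bmulDr bmulDl bmulDr opprD addrACA. Qed.

Lemma assoc3Dr x y z z' : assoc3 x y (z + z') = assoc3 x y z + assoc3 x y z'.
Proof. by rewrite /Defs.assoc3 !bmulDr opprD addrACA. Qed.

Lemma mul_assoc3l x y z : x ⋆ (y ⋆ z) = (x ⋆ y) ⋆ z - assoc3 x y z.
Proof. by rewrite /Defs.assoc3 subKr. Qed.
Lemma mul_assoc3r x y z : (x ⋆ y) ⋆ z = x ⋆ (y ⋆ z) + assoc3 x y z.
Proof. by rewrite /Defs.assoc3 subrKC. Qed.

Lemma eq_lie_poly m xs ys : xs =1 ys -> lie_poly m xs = lie_poly m ys.
Proof. by move=> eq_xy; elim: m => [|m IHm] /=; rewrite ?IHm eq_xy. Qed.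

Lemma lie_poly_eq0 m j xs : (j <= m)%N -> xs j = 0 -> lie_poly m xs = 0.
Proof.
move=> + xj0; elim: m => [|m IHm] /=; first by rewrite leqn0 => /eqP <-.
by rewrite leq_eqVlt ltnS => /predU1P [<- | /IHm ->]; rewrite ?xj0 ?lie0r ?lie0l.
Qed.

Lemma lie_poly_fwith_out m j w xs : (m < j)%N -> lie_poly m (fwith j w xs) = lie_poly m xs.
Proof.
elim: m => [|m IHm] lt_mj /=; first by rewrite ltn_eqF.
by rewrite IHm ?ltn_eqF // ltnW.
Qed.

Lemma lie_poly_fwithD m j a b xs : (j <= m)%N ->
  lie_poly m (fwith j (a + b) xs) = lie_poly m (fwith j a xs) + lie_poly m (fwith j b xs).
Proof.
elim: m => [|m IHm] /=; first by rewrite leqn0 => /eqP ->.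
rewrite leq_eqVlt ltnS => /predU1P [-> | le_jm].
  by rewrite !lie_poly_fwith_out // eqxx lieDr.
by rewrite IHm // gtn_eqF // lieDl.
Qed.

Definition defect (D : R -> R) a b := D (a + b) - D a - D b.

Lemma defectE D a b : D (a + b) = D a + D b + defect D a b.
Proof. by rewrite /defect -[D (a + b) - _ - _]addrA -opprD subrKC. Qed.

Lemma defect0l D b : D 0 = 0 -> defect D 0 b = 0.
Proof. by move=> D0; rewrite /defect add0r D0 subr0 subrr. Qed.

Lemma defect0r D a : D 0 = 0 -> defect D a 0 = 0.
Proof. by move=> D0; rewrite /defect addr0 D0 subr0 subrr. Qed.

Definition sum_defect (D : R -> R) (s : seq R) :=
  D (\sum_(x <- s) x) - \sum_(x <- s) D x.

Lemma sum_defect_cons D x s :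
  sum_defect D (x :: s) = defect D x (\sum_(y <- s) y) + sum_defect D s.
Proof. by rewrite /sum_defect /defect !big_cons opprD addrA [RHS]addrA subrK. Qed.

Section LieDerivation.
Variables (D : R -> R) (n : nat).
Hypothesis D_lie : lie_n_derivation mul n D.

Lemma lie_derivation0 : (1 < n)%N -> D 0 = 0.
Proof.
move=> n_gt1; have le1n : (1 <= n.-1)%N by rewrite -ltnS (ltn_predK n_gt1).
have := D_lie (fun=> 0); rewrite (lie_poly_eq0 (leq0n _)) // => ->.
rewrite big1 // => i _.
case: (posnP i) => [i0 | i_gt0].
  by apply: (lie_poly_eq0 le1n); rewrite i0.
by apply: (lie_poly_eq0 (leq0n _)); rewrite eq_sym gtn_eqF.
Qed.

Lemma lie_derivation_defect j xs a b : (j < n)%N ->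
  D (lie_poly n.-1 (fwith j (a + b) xs)) =
  D (lie_poly n.-1 (fwith j a xs)) + D (lie_poly n.-1 (fwith j b xs))
  + lie_poly n.-1 (fwith j (defect D a b) xs).
Proof.
move=> lt_jn; have le_jn : (j <= n.-1)%N by rewrite -ltnS (ltn_predK lt_jn).
rewrite !D_lie.
pose t w (i : 'I_n) :=
  lie_poly n.-1 (fun l => if l == i then D (fwith j w xs l) else fwith j w xs l).
have termD i : t (a + b) i = t a i + t b i +
    (if i == j :> nat then lie_poly n.-1 (fwith j (defect D a b) xs) else 0).
  rewrite /t; case: (eqVneq (i : nat) j) => [ij | neq_ij].
    have Dslot w : (fun l : nat => if l == i then D (fwith j w xs l) else fwith j w xs l)
        =1 fwith j (D w) xs by move=> l /=; rewrite ij; case: (l == j).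
    rewrite !(eq_lie_poly _ (Dslot _)).
    by rewrite defectE !lie_poly_fwithD.
  pose ys (l : nat) := if l == i then D (xs l) else xs l.
  have Dother w : (fun l : nat => if l == i then D (fwith j w xs l) else fwith j w xs l)
      =1 fwith j w ys.
    by move=> l; rewrite /ys /=; case: (eqVneq l j) => // ->; rewrite eq_sym (negbTE neq_ij).
  by rewrite !(eq_lie_poly _ (Dother _)) lie_poly_fwithD // addr0.
rewrite (eq_bigr _ (fun i _ => termD i)) !big_split /=.
by rewrite -big_mkcond (big_ord1_eq _ (fun=> _)) lt_jn.
Qed.

End LieDerivation.

Lemma lie2_derivation3 D : lie_n_derivation mul 2 D -> lie_n_derivation mul 3 D.
Proof.
move=> D_lie2 xs.
have := D_lie2 (fun l => if l == 0%N then lie (xs 0%N) (xs 1%N) else xs 2%N).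
have := D_lie2 xs.
rewrite /= !big_ord_recl !big_ord0 /= !addr0 => D_lie01 ->.
by rewrite D_lie01 lieDl [RHS]addrA.
Qed.

Section Alternative.
Hypothesis mul_alt : alternative mul.

Lemma assoc3_swapl x y z : assoc3 y x z = - assoc3 x y z.
Proof.
have := (mul_alt (x + y) z).1.
rewrite !(assoc3Dl, assoc3Dm) (mul_alt x z).1 (mul_alt y z).1 add0r addr0.
by move/eqP; rewrite addrC addr_eq0 => /eqP.
Qed.

Lemma assoc3_swapr x y z : assoc3 x z y = - assoc3 x y z.
Proof.
have := (mul_alt (y + z) x).2.
rewrite !(assoc3Dr, assoc3Dm) (mul_alt y x).2 (mul_alt z x).2 add0r addr0.
by move/eqP; rewrite addr_eq0 => /eqP.
Qed.

Lemma assoc3_cycle x y z : assoc3 x y z = assoc3 y z x.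
Proof. by rewrite [RHS]assoc3_swapr [in RHS]assoc3_swapl opprK. Qed.

Lemma mul_flexible x y : (x ⋆ y) ⋆ x = x ⋆ (y ⋆ x).
Proof. by rewrite mul_assoc3r assoc3_swapl (mul_alt x y).2 oppr0 addr0. Qed.

Section Peirce.
Variable e : R.
Hypothesis e_idem : e ⋆ e = e.

(* x lies in R_ij, the Peirce index 1 being encoded as [true] and 2 as [false]. *)
Definition in_peirce (i j : bool) (x : R) := e ⋆ x = x *+ i /\ x ⋆ e = x *+ j.

Lemma in_peirceD i j x y :
  in_peirce i j x -> in_peirce i j y -> in_peirce i j (x + y).
Proof.
by move=> [ex xe] [ey ye]; rewrite /in_peirce bmulDl bmulDr ex xe ey ye !mulrnDl.
Qed.

Lemma in_peirceN i j x : in_peirce i j x -> in_peirce i j (- x).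
Proof. by move=> [ex xe]; rewrite /in_peirce bmulNl bmulNr ex xe !mulNrn. Qed.

Lemma in_peirceMn i j m x : in_peirce i j x -> in_peirce i j (x *+ m).
Proof. by move=> [ex xe]; split; rewrite ?bmulMnl ?bmulMnr ?ex ?xe mulrnAC. Qed.

Lemma mul_e_e x : e ⋆ (e ⋆ x) = e ⋆ x.
Proof. by rewrite mul_assoc3l (mul_alt e x).1 subr0 e_idem. Qed.

Lemma mul_mul_e_e x : (x ⋆ e) ⋆ e = x ⋆ e.
Proof. by rewrite mul_assoc3r (mul_alt e x).2 addr0 e_idem. Qed.

Local Notation lmulE := (lmulE mul e).
Local Notation rmulE := (rmulE mul e).

Lemma mul_e_lmulE i x : e ⋆ lmulE i x = lmulE i x *+ (i == 1%N).
Proof. by rewrite /Defs.lmulE; case: (i == 1%N); rewrite /= ?bmulBr mul_e_e ?subrr. Qed.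

Lemma lmulE_mul_e i x : lmulE i x ⋆ e = lmulE i (x ⋆ e).
Proof. by rewrite /Defs.lmulE; case: (i == 1%N); rewrite /= ?bmulBl mul_flexible. Qed.

Lemma rmulE_mul_e j x : rmulE j x ⋆ e = rmulE j x *+ (j == 1%N).
Proof. by rewrite /Defs.rmulE; case: (j == 1%N); rewrite /= ?bmulBl mul_mul_e_e ?subrr. Qed.

Lemma peirce_in_peirce i j x :
  peirce mul e i j x <-> in_peirce (i == 1%N) (j == 1%N) x.
Proof.
have sel_id (b : bool) (y : R) : (if b then y *+ b else y - y *+ b) = y.
  by case: b; rewrite ?mulr1n ?mulr0n ?subr0.
split=> [[y ->] | [ex xe]].
  split; first exact: mul_e_lmulE.
  rewrite lmulE_mul_e rmulE_mul_e; case: (j == 1%N) => //.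
  by rewrite /Defs.lmulE bmul0r subrr if_same.
by exists x; rewrite /Defs.rmulE xe sel_id /Defs.lmulE ex sel_id.
Qed.

Lemma peirce_decomp x : exists a b c d,
  [/\ in_peirce true true a, in_peirce true false b, in_peirce false true c,
      in_peirce false false d & x = a + b + c + d].
Proof.
have lmulE_sum y : lmulE 1%N y + lmulE 2%N y = y by rewrite /Defs.lmulE subrKC.
have rmulE_sum y : rmulE 1%N y + rmulE 2%N y = y by rewrite /Defs.rmulE subrKC.
exists (lmulE 1%N (rmulE 1%N x)), (lmulE 1%N (rmulE 2%N x)).
exists (lmulE 2%N (rmulE 1%N x)), (lmulE 2%N (rmulE 2%N x)).
have x_ij i j : in_peirce (i == 1%N) (j == 1%N) (lmulE i (rmulE j x)).
  by apply/peirce_in_peirce; exists x.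
split; [exact: x_ij | exact: x_ij | exact: x_ij | exact: x_ij |].
by rewrite -addrA addrACA !lmulE_sum rmulE_sum.
Qed.

Lemma mul_e_mul x y : e ⋆ (x ⋆ y) = (e ⋆ x) ⋆ y + assoc3 x e y.
Proof. by rewrite mul_assoc3l assoc3_swapl opprK. Qed.

Lemma mul_mul_e x y : (x ⋆ y) ⋆ e = x ⋆ (y ⋆ e) - assoc3 x e y.
Proof. by rewrite mul_assoc3r assoc3_swapr. Qed.

Lemma assoc3_peirce i j k l x y : in_peirce i j x -> in_peirce k l y ->
  assoc3 x e y = (x ⋆ y) *+ j - (x ⋆ y) *+ k.
Proof. by move=> [_ xe] [ey _]; rewrite /Defs.assoc3 xe ey bmulMnl bmulMnr. Qed.

Lemma peirce_mul i j l x y :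
  in_peirce i j x -> in_peirce j l y -> in_peirce i l (x ⋆ y).
Proof.
move=> x_ij y_jl; have := assoc3_peirce x_ij y_jl; rewrite subrr => assoc0.
have [[ex _] [_ ye]] := (x_ij, y_jl).
by rewrite /in_peirce mul_e_mul mul_mul_e assoc0 addr0 subr0 ex ye bmulMnl bmulMnr.
Qed.

Lemma peirce_mul_sq i j x y :
  in_peirce i j x -> in_peirce i j y -> in_peirce j i (x ⋆ y).
Proof.
move=> x_ij y_ij; have [[ex _] [_ ye]] := (x_ij, y_ij).
rewrite /in_peirce mul_e_mul mul_mul_e (assoc3_peirce x_ij y_ij) ex ye.
by rewrite bmulMnl bmulMnr subrKC subKr.
Qed.

Lemma peirce_mul0 i j k x y :
  j != k -> in_peirce i j x -> in_peirce k i y -> x ⋆ y = 0.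
Proof.
move=> neq_jk x_ij y_ki; have [[ey _] [eyx _]] := (y_ki, peirce_mul y_ki x_ij).
have := assoc3_cycle x e y.
rewrite (assoc3_peirce x_ij y_ki) /Defs.assoc3 ey eyx bmulMnl subrr.
case: j k neq_jk {x_ij y_ki ey eyx} => -[] //= _; rewrite ?subr0 ?sub0r //.
by move/eqP; rewrite oppr_eq0 => /eqP.
Qed.

Lemma peirce_commute i j x y :
  i != j -> in_peirce i i x -> in_peirce j j y -> x ⋆ y = y ⋆ x.
Proof.
move=> neq_ij x_ii y_jj; have [[ey _] [ex _]] := (y_jj, x_ii).
have := assoc3_cycle x e y.
rewrite (assoc3_peirce x_ii y_jj) /Defs.assoc3 mul_e_mul (assoc3_peirce y_jj x_ii).
rewrite ey bmulMnl opprD addrA subrr add0r opprB.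
by case: i j neq_ij {x_ii y_jj ey ex} => -[] //= _; rewrite ?subr0 ?sub0r // => /oppr_inj.
Qed.

Lemma lie_diag_offdiag i a d x :
  in_peirce true true a -> in_peirce false false d -> in_peirce i (~~ i) x ->
  in_peirce i (~~ i) (lie (a + d) x).
Proof.
move=> a11 d22; rewrite /Defs.lie bmulDl bmulDr opprD addrACA.
case: i => x_i.
  rewrite (peirce_mul0 _ d22 x_i) // (peirce_mul0 _ x_i a11) // subr0 sub0r.
  exact: in_peirceD (peirce_mul a11 x_i) (in_peirceN (peirce_mul x_i d22)).
rewrite (peirce_mul0 _ a11 x_i) // (peirce_mul0 _ x_i d22) // sub0r subr0.
exact: in_peirceD (in_peirceN (peirce_mul x_i a11)) (peirce_mul d22 x_i).
Qed.

Lemma peirce_offdiag_sum_eq0 b c :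
  in_peirce true false b -> in_peirce false true c -> b + c = 0 -> b = 0 /\ c = 0.
Proof.
move=> [eb _] [ec _] bc0; suff b0 : b = 0 by split; last by rewrite -bc0 b0 add0r.
by have := congr1 (mul e) bc0; rewrite bmulDr eb ec bmul0r addr0.
Qed.

Local Notation ade := (lie^~ e).

Lemma lie_peirce_e i j x : in_peirce i j x -> lie x e = x *+ j - x *+ i.
Proof. by move=> [ex xe]; rewrite /Defs.lie ex xe. Qed.

Lemma iter_adeD m x y : iter m ade (x + y) = iter m ade x + iter m ade y.
Proof. by elim: m => //= m ->; rewrite lieDl. Qed.

Lemma iter_adeN m x : iter m ade (- x) = - iter m ade x.
Proof. by elim: m => //= m ->; rewrite lieNl. Qed.

Lemma iter_ade0 m : iter m ade 0 = 0.
Proof. by elim: m => //= m ->; rewrite lie0l. Qed.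

Lemma iter_ade_peirce m i j x : in_peirce i j x -> in_peirce i j (iter m ade x).
Proof.
move=> x_ij; elim: m => [|m IHm] //=; rewrite (lie_peirce_e IHm).
by apply: in_peirceD; [|apply: in_peirceN]; apply: in_peirceMn.
Qed.

Lemma iter_ade_diag m i x : in_peirce i i x -> iter m.+1 ade x = 0.
Proof. by move=> x_ii; rewrite iterSr (lie_peirce_e x_ii) subrr iter_ade0. Qed.

Lemma ade_offdiag i x : in_peirce i (~~ i) x -> lie x e = if i then - x else x.
Proof. by move/lie_peirce_e => ->; case: i; rewrite ?mulr1n ?mulr0n ?sub0r ?subr0. Qed.

Lemma ade_involutive i x : in_peirce i (~~ i) x -> lie (lie x e) e = x.
Proof.
move=> x_i; rewrite (ade_offdiag x_i).
by case: i x_i => x_i /=; rewrite ?lieNl (ade_offdiag x_i) ?opprK.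
Qed.

Lemma iter_ade_double m i x : in_peirce i (~~ i) x -> iter m.*2 ade x = x.
Proof. by move=> x_i; elim: m => //= m IHm; rewrite IHm (ade_involutive x_i). Qed.

Lemma iter_ade_offdiag_eq0 m i x : in_peirce i (~~ i) x -> iter m ade x = 0 -> x = 0.
Proof. by move=> x_i x0; rewrite -(iter_ade_double m x_i) -addnn iterD x0 iter_ade0. Qed.

Section LieTypeDerivation.
Variables (D : R -> R) (k : nat).
Hypothesis D_lie : lie_n_derivation mul k.+3 D.
Hypothesis central_of_lie_offdiag : forall (i : bool) a d,
  in_peirce true true a -> in_peirce false false d ->
  (forall x, in_peirce i (~~ i) x -> lie (a + d) x = 0) -> central mul (a + d).

Definition lie_e y v := lie_poly k.+2 (fwith 0%N y (fwith 1%N v (fun=> e))).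

Let D0 : D 0 = 0 := lie_derivation0 D_lie isT.

Lemma lie_eE y v : lie_e y v = iter k.+1 ade (lie y v).
Proof. by rewrite /lie_e; elim: k.+1 => //= m ->. Qed.

Lemma lie_eDl a b v : lie_e (a + b) v = lie_e a v + lie_e b v.
Proof. by rewrite !lie_eE lieDl iter_adeD. Qed.

Lemma lie_eDr a b y : lie_e y (a + b) = lie_e y a + lie_e y b.
Proof. by rewrite !lie_eE lieDr iter_adeD. Qed.

Lemma lie_e0l v : lie_e 0 v = 0.
Proof. by rewrite lie_eE lie0l iter_ade0. Qed.

Lemma lie_eC y v : lie_e v y = - lie_e y v.
Proof. by rewrite !lie_eE lieC iter_adeN. Qed.

Lemma lie_eNl y v : lie_e (- y) v = - lie_e y v.
Proof. by rewrite !lie_eE lieNl iter_adeN. Qed.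

Lemma lie_e_centrall z v : central mul z -> lie_e z v = 0.
Proof. by move=> z_central; rewrite lie_eE z_central iter_ade0. Qed.

Lemma lie_e_centralr z y : central mul z -> lie_e y z = 0.
Proof. by move=> z_central; rewrite lie_eC lie_e_centrall ?oppr0. Qed.

Lemma lie_e_e y : lie_e y e = iter k.+2 ade y.
Proof. by rewrite lie_eE [RHS]iterSr. Qed.

Lemma lie_e_peirce i j y v : in_peirce i j (lie y v) -> in_peirce i j (lie_e y v).
Proof. by rewrite lie_eE; apply: iter_ade_peirce. Qed.

Lemma lie_e_diag_e i a : in_peirce i i a -> lie_e a e = 0.
Proof. by move=> a_ii; rewrite lie_e_e (iter_ade_diag _ a_ii). Qed.

Lemma lie_e_offdiag i x y : in_peirce i (~~ i) x -> in_peirce (~~ i) i y -> lie_e x y = 0.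
Proof.
move=> x_i y_i; rewrite lie_eE /Defs.lie iter_adeD iter_adeN.
by rewrite (iter_ade_diag _ (peirce_mul x_i y_i)) (iter_ade_diag _ (peirce_mul y_i x_i)) subrr.
Qed.

Lemma D_lie_eDl a b v :
  D (lie_e (a + b) v) = D (lie_e a v) + D (lie_e b v) + lie_e (defect D a b) v.
Proof. exact: (lie_derivation_defect D_lie _ _ _ (ltn0Sn _)). Qed.

Lemma D_lie_eDr a b y :
  D (lie_e y (a + b)) = D (lie_e y a) + D (lie_e y b) + lie_e y (defect D a b).
Proof.
have swap w : fwith 0%N y (fwith 1%N w (fun=> e)) =1 fwith 1%N w (fwith 0%N y (fun=> e)).
  by move=> l /=; case: l => [|[|l]].
rewrite /lie_e !(eq_lie_poly _ (swap _)).
exact: (lie_derivation_defect D_lie _ _ _ (isT : 1 < k.+3)%N).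
Qed.

Lemma lie_e_defect a b v : lie_e (defect D a b) v = defect D (lie_e a v) (lie_e b v).
Proof.
apply: (@addrI _ (D (lie_e a v) + D (lie_e b v))).
by rewrite -D_lie_eDl lie_eDl -defectE.
Qed.

Lemma lie_e_defect_eq0 a b v :
  lie_e a v = 0 \/ lie_e b v = 0 -> lie_e (defect D a b) v = 0.
Proof. by rewrite lie_e_defect => -[->|->]; rewrite ?defect0l ?defect0r. Qed.

Lemma lie_e_sum_defect s v :
  lie_e (sum_defect D s) v = sum_defect D [seq lie_e x v | x <- s].
Proof.
have lie_e_sum t : lie_e (\sum_(x <- t) x) v = \sum_(x <- t) lie_e x v.
  by elim: t => [|x t IHt]; rewrite ?big_nil ?big_cons ?lie_e0l // lie_eDl IHt.
elim: s => [|x s IHs]; first by rewrite /sum_defect !big_nil D0 subr0 lie_e0l.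
by rewrite /= !sum_defect_cons lie_eDl IHs lie_e_defect lie_e_sum big_map.
Qed.

Lemma central_of_lie_e i z :
  lie_e z e = 0 -> (forall x, in_peirce i (~~ i) x -> lie_e z x = 0) -> central mul z.
Proof.
have [a [b [c [d [a11 b12 c21 d22 ->]]]]] := peirce_decomp z.
rewrite lie_e_e !iter_adeD (iter_ade_diag _ a11) (iter_ade_diag _ d22) add0r addr0.
move=> /(peirce_offdiag_sum_eq0 (iter_ade_peirce _ b12) (iter_ade_peirce _ c21)).
move=> [/(iter_ade_offdiag_eq0 b12) -> /(iter_ade_offdiag_eq0 c21) ->].
rewrite !addr0 => lie_e_ad0; apply: (central_of_lie_offdiag (i := i) a11 d22) => x x_i.
apply: (iter_ade_offdiag_eq0 (m := k.+1) (lie_diag_offdiag a11 d22 x_i)).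
by rewrite -lie_eE lie_e_ad0.
Qed.

Lemma central_defect i a b :
  lie_e a e = 0 \/ lie_e b e = 0 ->
  (forall x, in_peirce i (~~ i) x -> lie_e a x = 0 \/ lie_e b x = 0) ->
  central mul (defect D a b).
Proof.
move=> ab_e ab_x; apply: (central_of_lie_e (i := i)); first exact: lie_e_defect_eq0.
by move=> x /ab_x /lie_e_defect_eq0.
Qed.

Lemma D_lie_e_additive x1 x2 y1 y2 :
  central mul (defect D x1 x2) -> central mul (defect D y1 y2) ->
  D (lie_e (x1 + x2) (y1 + y2)) =
  D (lie_e x1 y1) + D (lie_e x1 y2) + D (lie_e x2 y1) + D (lie_e x2 y2).
Proof.
move=> x_central y_central.
rewrite D_lie_eDl (lie_e_centrall _ x_central) !D_lie_eDr !(lie_e_centralr _ y_central).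
by rewrite !addr0 addrA.
Qed.

Lemma D_add_offdiag b c :
  in_peirce true false b -> in_peirce false true c -> D (b + c) = D b + D c.
Proof.
(* Bracketing with e is an involution on R_12 and R_21, so b = p(b', e) and c = p(e, c'). *)
move=> b12 c21; pose b' := iter k.+2 ade b; pose c' := - iter k.+2 ade c.
have b'12 : in_peirce true false b' := iter_ade_peirce _ b12.
have c'21 : in_peirce false true c' := in_peirceN (iter_ade_peirce _ c21).
have e11 : in_peirce true true e by split; rewrite e_idem.
have eb'_central : central mul (defect D e b').
  apply: (central_defect (i := false)); first by left; apply: lie_e_diag_e e11.
  by move=> x x21; right; apply: lie_e_offdiag b'12 x21.
have ec'_central : central mul (defect D e c').
  apply: (central_defect (i := true)); first by left; apply: lie_e_diag_e e11.
  by move=> x x12; right; apply: lie_e_offdiag c'21 x12.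
have ee0 : lie_e e e = 0 := lie_e_diag_e e11.
have ec' : lie_e e c' = c.
  by rewrite lie_eC lie_eNl opprK lie_e_e -iterD addnn (iter_ade_double _ c21).
have b'e : lie_e b' e = b by rewrite lie_e_e -iterD addnn (iter_ade_double _ b12).
have b'c' : lie_e b' c' = 0 := lie_e_offdiag b'12 c'21.
have := D_lie_e_additive eb'_central ec'_central.
rewrite lie_eDl !lie_eDr ee0 ec' b'e b'c' D0 add0r !addr0 add0r addrC => ->.
exact: addrC.
Qed.

Lemma D_add_lie_e_diag a x d :
  in_peirce true true a -> in_peirce false true x -> in_peirce false false d ->
  D (lie_e a x + lie_e d x) = D (lie_e a x) + D (lie_e d x).
Proof.
move=> a11 x21 d22; have Nx21 := in_peirceN x21.
have xd_central : central mul (defect D (- x) d).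
  apply: (central_defect (i := true)); first by right; apply: lie_e_diag_e d22.
  by move=> y y12; left; apply: lie_e_offdiag Nx21 y12.
have ax_central : central mul (defect D a x).
  apply: (central_defect (i := true)); first by left; apply: lie_e_diag_e a11.
  by move=> y y12; right; apply: lie_e_offdiag x21 y12.
have Nxa : lie_e (- x) a = lie_e a x by rewrite lie_eNl lie_eC opprK.
have Nxx : lie_e (- x) x = 0 by rewrite lie_eE lieNl /Defs.lie subrr oppr0 iter_ade0.
have da : lie_e d a = 0.
  by rewrite lie_eE /Defs.lie (peirce_commute _ d22 a11) // subrr iter_ade0.
have := D_lie_e_additive xd_central ax_central.
by rewrite lie_eDl !lie_eDr Nxa Nxx da D0 !addr0 add0r.
Qed.

Lemma central_sum_defect a b c d :
  in_peirce true true a -> in_peirce true false b ->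
  in_peirce false true c -> in_peirce false false d ->
  central mul (sum_defect D [:: a; b; c; d]).
Proof.
move=> a11 b12 c21 d22; apply: (central_of_lie_e (i := false)).
  rewrite lie_e_sum_defect /= (lie_e_diag_e a11) (lie_e_diag_e d22).
  rewrite /sum_defect !big_cons !big_nil D0 !add0r !addr0.
  by rewrite D_add_offdiag ?subrr // lie_e_e; apply: iter_ade_peirce.
move=> x x21; rewrite lie_e_sum_defect /= (lie_e_offdiag b12 x21).
have ax21 : in_peirce false true (lie_e a x).
  apply: lie_e_peirce; rewrite /Defs.lie (peirce_mul0 _ a11 x21) // sub0r.
  exact/in_peirceN/(peirce_mul x21 a11).
have dx21 : in_peirce false true (lie_e d x).
  apply: lie_e_peirce; rewrite /Defs.lie (peirce_mul0 _ x21 d22) // subr0.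
  exact: peirce_mul d22 x21.
have cx12 : in_peirce true false (lie_e c x).
  apply: lie_e_peirce; apply: in_peirceD; [|apply: in_peirceN]; exact: peirce_mul_sq.
rewrite /sum_defect !big_cons !big_nil D0 !add0r !addr0.
have adx21 := in_peirceD ax21 dx21.
rewrite [lie_e a x + _]addrCA D_add_offdiag // (D_add_lie_e_diag a11 x21 d22).
by rewrite addrCA subrr.
Qed.

End LieTypeDerivation.

End Peirce.
End Alternative.
End NonAssociative.

Theorem lemma2p6 (R : zmodType) (mul : R -> R -> R) (e1 : R) (D : R -> R) :
  biadditive mul ->
  alternative mul ->
  nontrivial_idempotent mul e1 ->
  (forall a11 a22, peirce mul e1 1 1 a11 -> peirce mul e1 2 2 a22 ->
     (forall x, peirce mul e1 1 2 x -> lie mul (a11 + a22) x = 0) ->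
     central mul (a11 + a22)) ->
  (forall a11 a22, peirce mul e1 1 1 a11 -> peirce mul e1 2 2 a22 ->
     (forall x, peirce mul e1 2 1 x -> lie mul (a11 + a22) x = 0) ->
     central mul (a11 + a22)) ->
  lie_type_derivation mul D ->
  forall a11 b12 c21 d22,
    peirce mul e1 1 1 a11 -> peirce mul e1 1 2 b12 ->
    peirce mul e1 2 1 c21 -> peirce mul e1 2 2 d22 ->
    exists z, central mul z /\
      D (a11 + b12 + c21 + d22) = D a11 + D b12 + D c21 + D d22 + z.
Proof.
move=> mul_biadd mul_alt [_ [e_idem _]] central12 central21 [n [n_ge2 D_lie]].
have peirceP := peirce_in_peirce mul_biadd mul_alt e_idem.
have [k D_lie3] : exists k, lie_n_derivation mul k.+3 D.
  case: n n_ge2 D_lie => [|[|[|k]]] // _ D_lie; last by exists k.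
  by exists 0%N; apply: lie2_derivation3.
have central_of_lie_offdiag (i : bool) a d :
    in_peirce mul e1 true true a -> in_peirce mul e1 false false d ->
    (forall x, in_peirce mul e1 i (~~ i) x -> lie mul (a + d) x = 0) ->
    central mul (a + d).
  move=> a11 d22; case: i => lie0; [apply: central12 | apply: central21];
    by [apply/peirceP | apply/peirceP | move=> x /peirceP; apply: lie0].
move=> a b c d /peirceP a11 /peirceP b12 /peirceP c21 /peirceP d22.
exists (sum_defect D [:: a; b; c; d]); split.
  exact (central_sum_defect mul_biadd mul_alt e_idem D_lie3 central_of_lie_offdiag
    a11 b12 c21 d22).
by rewrite /sum_defect !big_cons !big_nil !addr0 !addrA [RHS]addrAC subrr add0r.
Qed.
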